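(* Let $\frac13<H<\frac12$, $T>0$, $p\in(\frac1H,\frac1{1-2H})$. Define $\gamma:\mathcal{W}^2_p\to M_3(\mathbb{R})$ by \[ \gamma(\omega)=\begin{pmatrix}T^{2H}I_2 & (Q\omega)(T)\\ \left((Q\omega)(T)\right)^{tr} & \|Q\omega\|^2_{\mathcal{H}^2}\end{pmatrix}, \] and the quadratic form $\Phi(\omega)=T^{4H}\|Q\omega\|^2_{\mathcal{H}^2}-T^{2H}|(Q\omega)(T)|^2$ on $\mathcal{W}^2_p$. Let $B$ be two-dimensional fBm with Hurst parameter $H$ as the coordinate process on $\mathcal{W}^2_p$, and $Y_T=(B_T,A_T)$ with Malliavin derivative $DY_T$. Then (1) $DY_T(DY_T)^*=\gamma(B)$ almost surely; (2) $\Phi=\det\gamma$.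
   Context: $R(s,t)=\frac12(s^{2H}+t^{2H}-|t-s|^{2H})$; $\mathcal{H}$ is its reproducing kernel Hilbert space and $\mathcal{H}^2=\mathcal{H}\otimes\mathbb{R}^2$ (Cameron–Martin space of 2D fBm). $\mathcal{W}^2_p$ is the closure in $p$-variation norm of smooth $\mathbb{R}^2$-valued paths on $[0,T]$ starting at $0$. For $\omega=(\omega^1,\omega^2)\in\mathcal{W}^2_p$, $\tilde\omega=(\omega^2,-\omega^1)$ and $Q\omega=\frac12R(T,\cdot)\tilde\omega(T)-\int_0^T\tilde\omega(t)R(dt,\cdot)\in\mathcal{H}^2$, where $\int_0^T\alpha(t)R(dt,\cdot)$ is the $\mathcal{H}$-limit of $\sum_i\alpha(c_i)[R(t_i,\cdot)-R(t_{i-1},\cdot)]$ as the mesh tends to zero (componentwise). $A_T$ is the a.s. limit of $\frac12\int_0^T((B^1_m)dB^2_m-(B^2_m)dB^1_m)$ over dyadic piecewise linear approximations $B_m$ of $B$. $DY_T:\mathcal{H}^2\to\mathbb{R}^3$ is the Malliavin derivative, given by $DY_Th=(h(T),\langle QB,h\rangle_{\mathcal{H}^2})$, and $(DY_T)^*:\mathbb{R}^3\to\mathcal{H}^2$ its adjoint. *)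

From HB Require Import structures.
From mathcomp Require Import all_boot all_order all_algebra.
From mathcomp Require Import all_classical all_reals all_analysis.
Set Implicit Arguments. Unset Strict Implicit. Unset Printing Implicit Defensive.
Import Order.TTheory GRing.Theory Num.Theory.
Import numFieldNormedType.Exports.
Local Open Scope classical_set_scope.
Local Open Scope ring_scope.

Section Defs.
Variable R : realType.

Definition Rcov (H s t : R) : R :=
  (s `^ (2 * H) + t `^ (2 * H) - `|t - s| `^ (2 * H)) / 2.

(* Functions on [0,T] are represented as R -> R, extended by 0 outside [0,T]. *)
Definition in0T (T s : R) : bool := (0 <= s) && (s <= T).

Definition ksec (H T t : R) : R -> R :=
  fun s => if in0T T s then Rcov H t s else 0.

Definition nrm (ip : (R -> R) -> (R -> R) -> R) (f : R -> R) : R :=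
  Num.sqrt (ip f f).

Definition is_rkhs (T : R) (K : R -> R -> R)
    (S : set (R -> R)) (ip : (R -> R) -> (R -> R) -> R) : Prop :=
  [/\
      (forall h, S h -> forall s, ~~ in0T T s -> h s = 0),
      S (fun _ => 0) /\
      (forall a f g, S f -> S g -> S (fun s => a * f s + g s)),
      [/\ (forall f g, S f -> S g -> ip f g = ip g f),
          (forall a f g h, S f -> S g -> S h ->
             ip (fun s => a * f s + g s) h = a * ip f h + ip g h),
          (forall f, S f -> 0 <= ip f f) &
          (forall f, S f -> ip f f = 0 -> f = (fun _ => 0))],
      (forall u : nat -> R -> R, (forall n, S (u n)) ->
         (forall e : R, 0 < e -> exists N : nat, forall m n : nat,
             (N <= m)%N -> (N <= n)%N -> nrm ip (fun s => u m s - u n s) < e) ->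
         exists2 h, S h & (fun n => nrm ip (fun s => u n s - h s)) @ \oo --> (0 : R)) &
      (forall t, in0T T t ->
         S (fun s => if in0T T s then K t s else 0) /\
         forall h, S h -> ip (fun s => if in0T T s then K t s else 0) h = h t)].

(* R^2-valued paths and elements of H^2 = H (x) R^2 are pairs of functions *)
Definition path2 := ((R -> R) * (R -> R))%type.

Definition S2 (S : set (R -> R)) (h : path2) : Prop := S h.1 /\ S h.2.
Definition ip2 (ip : (R -> R) -> (R -> R) -> R) (g h : path2) : R :=
  ip g.1 h.1 + ip g.2 h.2.

Definition partition (T : R) (ts : seq R) : Prop :=
  [/\ (0 < size ts)%N, nth 0 ts 0 = 0, last 0 ts = T &
      forall i, (i.+1 < size ts)%N -> nth 0 ts i < nth 0 ts i.+1].

Definition tagged_partition (T : R) (ts cs : seq R) : Prop :=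
  [/\ partition T ts, size ts = (size cs).+1 &
      forall i, (i < size cs)%N ->
        nth 0 ts i <= nth 0 cs i /\ nth 0 cs i <= nth 0 ts i.+1].

Definition mesh (ts : seq R) : R :=
  \big[Num.max/0]_(i < (size ts).-1) (nth 0 ts i.+1 - nth 0 ts i).

Definition RSsum (H T : R) (alpha : R -> R) (ts cs : seq R) : R -> R :=
  fun s => \sum_(i < size cs)
     alpha (nth 0 cs i) * (ksec H T (nth 0 ts i.+1) s - ksec H T (nth 0 ts i) s).

(* g = int_0^T alpha(t) R(dt, .) : the H-limit of Riemann sums as mesh -> 0 *)
Definition is_Rint (H T : R) (ip : (R -> R) -> (R -> R) -> R)
    (S : set (R -> R)) (alpha : R -> R) (g : R -> R) : Prop :=
  S g /\
  forall e : R, 0 < e -> exists2 d : R, 0 < d &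
    forall ts cs, tagged_partition T ts cs -> mesh ts < d ->
      nrm ip (fun s => RSsum H T alpha ts cs s - g s) < e.

(* q = Q w = 1/2 R(T,.) w~(T) - int_0^T w~(t) R(dt,.),  w~ = (w^2, -w^1) *)
Definition is_Q (H T : R) (S : set (R -> R)) (ip : (R -> R) -> (R -> R) -> R)
    (w q : path2) : Prop :=
  let wt1 := w.2 in let wt2 := fun t => - w.1 t in
  exists g1 g2,
    [/\ is_Rint H T ip S wt1 g1, is_Rint H T ip S wt2 g2,
        q.1 = (fun s => 2^-1 * ksec H T T s * wt1 T - g1 s) &
        q.2 = (fun s => 2^-1 * ksec H T T s * wt2 T - g2 s)].

Definition pvar_sum (p : R) (w : path2) (ts : seq R) : R :=
  (\sum_(i < (size ts).-1)
     Num.sqrt ((w.1 (nth 0 ts i.+1) - w.1 (nth 0 ts i)) ^+ 2 +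
               (w.2 (nth 0 ts i.+1) - w.2 (nth 0 ts i)) ^+ 2) `^ p) `^ p^-1.

Definition smooth (f : R -> R) : Prop :=
  forall (k : nat) (t : R), derivable (iter k (fun g : R -> R => derive1 g) f) t 1.

(* W^2_p : closure in p-variation norm of smooth R^2-valued paths started at 0 *)
Definition in_Wp (T p : R) (w : path2) : Prop :=
  w.1 0 = 0 /\ w.2 0 = 0 /\
  exists phi : nat -> path2,
    (forall n, smooth (phi n).1 /\ smooth (phi n).2 /\
               (phi n).1 0 = 0 /\ (phi n).2 0 = 0) /\
    forall e : R, 0 < e -> exists N : nat, forall n : nat, (N <= n)%N ->
      forall ts, partition T ts ->
        pvar_sum p (fun t => w.1 t - (phi n).1 t, fun t => w.2 t - (phi n).2 t) ts
          <= e.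

Definition col3 (a b c : R) : 'cV[R]_3 :=
  \col_(i < 3) (if val i == 0%N then a else if val i == 1%N then b else c).

Definition dot3 (u v : 'cV[R]_3) : R := \sum_(i < 3) u i ord0 * v i ord0.

(* Malliavin derivative of Y_T = (B_T, A_T) at the path w (q = Q w):
   DY_T h = (h(T), <Q B, h>_{H^2}) *)
Definition DY (T : R) (ip : (R -> R) -> (R -> R) -> R) (q : path2)
    (h : path2) : 'cV[R]_3 :=
  col3 (h.1 T) (h.2 T) (ip2 ip q h).

Definition is_adjoint (S : set (R -> R)) (ip : (R -> R) -> (R -> R) -> R)
    (L : path2 -> 'cV[R]_3) (A : 'cV[R]_3 -> path2) : Prop :=
  (forall v, S2 S (A v)) /\
  (forall h v, S2 S h -> dot3 (L h) v = ip2 ip h (A v)).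

Definition gammaM (H T : R) (ip : (R -> R) -> (R -> R) -> R) (q : path2)
    : 'M[R]_3 :=
  \matrix_(i < 3, j < 3)
    match val i, val j with
    | 0%N, 0%N => T `^ (2 * H)
    | 1%N, 1%N => T `^ (2 * H)
    | 0%N, 2%N | 2%N, 0%N => q.1 T
    | 1%N, 2%N | 2%N, 1%N => q.2 T
    | 2%N, 2%N => ip2 ip q q
    | _, _ => 0
    end.

Definition Phi (H T : R) (ip : (R -> R) -> (R -> R) -> R) (q : path2) : R :=
  T `^ (4 * H) * ip2 ip q q - T `^ (2 * H) * (q.1 T ^+ 2 + q.2 T ^+ 2).

End Defs.

(** The adjoint of [DY_T h = (h(T), <Q B, h>)] is read off the reproducing
    property: [h(T) = <R(T,.), h>], so
    [(DY_T)^* v = (v_1 R(T,.) + v_3 (QB)^1, v_2 R(T,.) + v_3 (QB)^2)].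
    Applying [DY_T] again and using [R(T,T) = T^{2H}] gives the Gram matrix
    [gamma(B)]; any adjoint agrees with this one at [T] and against [QB],
    which is all [DY_T] sees.  Expanding the 3x3 determinant along the last
    column gives [Phi]. *)
From HB Require Import structures.
From mathcomp Require Import all_boot all_order all_algebra.
From mathcomp Require Import all_classical all_reals all_analysis.
From mathcomp Require Import ring lra.
Set Implicit Arguments. Unset Strict Implicit.
Import Order.TTheory GRing.Theory Num.Theory.
Local Open Scope classical_set_scope.
Local Open Scope ring_scope.

Section BilinearForm.
Variables (R : realType) (S : set (R -> R)) (ip : (R -> R) -> (R -> R) -> R).
Hypotheses (S0 : S (fun _ => 0))
  (S_lincomb : forall a f g, S f -> S g -> S (fun s => a * f s + g s))
  (ipC : forall f g, S f -> S g -> ip f g = ip g f)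
  (ip_lincombl : forall a f g h, S f -> S g -> S h ->
     ip (fun s => a * f s + g s) h = a * ip f h + ip g h).

Lemma S_scale a f : S f -> S (fun s => a * f s).
Proof.
move=> Sf; have -> : (fun s => a * f s) = (fun s => a * f s + 0).
  by apply: funext => s; rewrite addr0.
exact: S_lincomb.
Qed.

Lemma S_add f g : S f -> S g -> S (fun s => f s + g s).
Proof.
move=> Sf Sg; have -> : (fun s => f s + g s) = (fun s => 1 * f s + g s).
  by apply: funext => s; rewrite mul1r.
exact: S_lincomb.
Qed.

Lemma ip0l h : S h -> ip (fun _ => 0) h = 0.
Proof.
move=> Sh; have := ip_lincombl 1 S0 S0 Sh.
have -> : (fun s : R => 1 * 0 + 0) = (fun _ : R => 0 : R) by rewrite mulr0 addr0.
rewrite mul1r; lra.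
Qed.

Lemma ip0r h : S h -> ip h (fun _ => 0) = 0.
Proof. by move=> Sh; rewrite ipC // ip0l. Qed.

Lemma ipZl a f h : S f -> S h -> ip (fun s => a * f s) h = a * ip f h.
Proof.
move=> Sf Sh; have -> : (fun s => a * f s) = (fun s => a * f s + 0).
  by apply: funext => s; rewrite addr0.
by rewrite ip_lincombl // ip0l // addr0.
Qed.

Lemma ipDl f g h : S f -> S g -> S h ->
  ip (fun s => f s + g s) h = ip f h + ip g h.
Proof.
move=> Sf Sg Sh; have -> : (fun s => f s + g s) = (fun s => 1 * f s + g s).
  by apply: funext => s; rewrite mul1r.
by rewrite ip_lincombl // mul1r.
Qed.

Lemma ip_lincomb2r a b f g h : S f -> S g -> S h ->
  ip h (fun s => a * f s + b * g s) = a * ip h f + b * ip h g.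
Proof.
move=> Sf Sg Sh.
have Saf := S_scale a Sf; have Sbg := S_scale b Sg.
rewrite (ipC Sh (S_add Saf Sbg)) ipDl // !ipZl //.
by rewrite (ipC Sf) // (ipC Sg).
Qed.

End BilinearForm.

Lemma det_mx33 (R : comRingType) (M : 'M[R]_3) :
  let m i j := M (inord i) (inord j) in
  \det M = m 0 0 * (m 1 1 * m 2 2 - m 1 2 * m 2 1)
          - m 0 1 * (m 1 0 * m 2 2 - m 1 2 * m 2 0)
          + m 0 2 * (m 1 0 * m 2 1 - m 1 1 * m 2 0).
Proof.
move=> m; have -> : M = \matrix_(i, j) m i j.
  by apply/matrixP => i j; rewrite mxE /m !inord_val.
rewrite (expand_det_row _ ord0) !big_ord_recl big_ord0 /cofactor.
rewrite !(expand_det_row _ ord0) /cofactor !big_ord_recl !big_ord0.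
rewrite !(expand_det_row _ ord0) /cofactor !big_ord_recl !big_ord0 !det_mx00.
by rewrite !mxE /=; ring.
Qed.

Lemma dot3_col3 (R : realType) a b c (v : 'cV[R]_3) :
  dot3 (col3 a b c) v = a * v ord0 ord0 + b * v (lift ord0 ord0) ord0
     + c * v (lift ord0 (lift ord0 ord0)) ord0.
Proof. by rewrite /dot3 !big_ord_recl big_ord0 !mxE /= addr0 addrA. Qed.

Lemma powR_mul2 (R : realType) (a x : R) : 0 <= a ->
  a `^ (2 * x) = (a `^ x) ^+ 2.
Proof. by move=> a0; rewrite mulrC powRrM powR_mulrn ?powR_ge0. Qed.

Lemma Rcov_diag (R : realType) (H t : R) : 0 <= t -> H != 0 ->
  Rcov H t t = t `^ (2 * H).
Proof.
move=> t0 H0; rewrite /Rcov subrr normr0 powR0; last by rewrite mulf_neq0.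
by rewrite subr0; field.
Qed.

Lemma det_gammaM (R : realType) (H T : R) ip (q : path2 R) : 0 <= T ->
  Phi H T ip q = \det (gammaM H T ip q).
Proof.
move=> T0; rewrite det_mx33 /Phi !mxE.
have val_inord k : (k < 3)%N -> \val (inord k : 'I_3) = k by apply: inordK.
rewrite !val_inord //=.
by rewrite (_ : 4 * H = 2 * (2 * H)) ?powR_mul2 //=; ring.
Qed.

Section MalliavinGram.
Variables (R : realType) (H T : R) (S : set (R -> R)).
Variables (ip : (R -> R) -> (R -> R) -> R) (q : path2 R).
Hypotheses (T0 : 0 <= T) (H0 : H != 0) (rkhs : is_rkhs T (Rcov H) S ip)
  (Sq : S2 S q).

Let K := ksec H T T.

Let S0 : S (fun _ => 0). Proof. by case: rkhs => _ []. Qed.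
Let S_lincomb a f g : S f -> S g -> S (fun s => a * f s + g s).
Proof. by case: rkhs => _ [_ SL] _ _ _; apply: SL. Qed.
Let ipC f g : S f -> S g -> ip f g = ip g f.
Proof. by case: rkhs => _ _ [C _ _ _] _ _; apply: C. Qed.
Let ip_lincombl a f g h : S f -> S g -> S h ->
  ip (fun s => a * f s + g s) h = a * ip f h + ip g h.
Proof. by case: rkhs => _ _ [_ L _ _] _ _; apply: L. Qed.

Let inT : in0T T T. Proof. by rewrite /in0T T0 lexx. Qed.
Let SK : S K. Proof. by case: rkhs => _ _ _ _ /(_ T inT) []. Qed.
Let reprK h : S h -> ip K h = h T.
Proof. by case: rkhs => _ _ _ _ /(_ T inT) [_]; apply. Qed.
Let KT : K T = T `^ (2 * H). Proof. by rewrite /K /ksec inT Rcov_diag. Qed.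

Definition DY_adj (v : 'cV[R]_3) : path2 R :=
  (fun s => v ord0 ord0 * K s + v (lift ord0 (lift ord0 ord0)) ord0 * q.1 s,
   fun s => v (lift ord0 ord0) ord0 * K s
            + v (lift ord0 (lift ord0 ord0)) ord0 * q.2 s).

Lemma DY_adj_adjoint : is_adjoint S ip (DY T ip q) DY_adj.
Proof.
have [Sq1 Sq2] := Sq.
split=> [v | h v [Sh1 Sh2]].
  by split; apply: S_add => //; apply: S_scale.
rewrite /DY dot3_col3 /ip2 /= !(ip_lincomb2r S0 S_lincomb ipC ip_lincombl) //.
by rewrite !(ipC _ SK) // !reprK // (ipC Sq1) // (ipC Sq2) //; ring.
Qed.

Lemma DY_adjoint_gram A : is_adjoint S ip (DY T ip q) A ->
  forall v, DY T ip q (A v) = gammaM H T ip q *m v.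
Proof.
have [Sq1 Sq2] := Sq.
move=> [SA adj] v; have [SA1 SA2] := SA v.
have l0 := ip0l S0 ip_lincombl; have r0 := ip0r S0 ipC ip_lincombl.
have AvT1 : (A v).1 T = T `^ (2 * H) * v ord0 ord0
    + q.1 T * v (lift ord0 (lift ord0 ord0)) ord0.
  have := adj (K, fun _ => 0) v (conj SK S0).
  rewrite /DY dot3_col3 /ip2 /= !reprK // l0 // r0 // KT (ipC Sq1) // reprK //.
  lra.
have AvT2 : (A v).2 T = T `^ (2 * H) * v (lift ord0 ord0) ord0
    + q.2 T * v (lift ord0 (lift ord0 ord0)) ord0.
  have := adj (fun _ => 0, K) v (conj S0 SK).
  rewrite /DY dot3_col3 /ip2 /= !reprK // l0 // r0 // KT (ipC Sq2) // reprK //.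
  lra.
have ipqAv : ip2 ip q (A v) = q.1 T * v ord0 ord0
    + q.2 T * v (lift ord0 ord0) ord0
    + ip2 ip q q * v (lift ord0 (lift ord0 ord0)) ord0.
  by rewrite -adj // dot3_col3.
apply/matrixP => i j; rewrite (ord1 j) /DY !mxE !big_ord_recl big_ord0 !mxE /=.
by case: i => [[|[|[|i]]] Hi] //=; rewrite ?AvT1 ?AvT2 ?ipqAv; ring.
Qed.

End MalliavinGram.

Lemma is_Q_S2 (R : realType) (H T : R) S ip (w q : path2 R) :
  0 <= T -> is_rkhs T (Rcov H) S ip -> is_Q H T S ip w q -> S2 S q.
Proof.
move=> T0 [_ [S0 S_lincomb] _ _ Kp] [g1 [g2 [[Sg1 _] [Sg2 _] q1E q2E]]].
have [SK _] : S (ksec H T T) /\ _ := Kp T (introT andP (conj T0 (lexx T))).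
have S_KminusG c g : S g -> S (fun s => 2^-1 * ksec H T T s * c - g s).
  move=> Sg; have -> : (fun s => 2^-1 * ksec H T T s * c - g s)
     = (fun s => (2^-1 * c) * ksec H T T s + ((-1) * g s + 0)).
    by apply: funext => s; ring.
  by apply: (S_lincomb) => //; apply: (S_lincomb).
by rewrite /S2 q1E q2E; split; apply: S_KminusG.
Qed.

Theorem proposition3p13 (R : realType) (H T p : R)
    (S : set (R -> R)) (ip : (R -> R) -> (R -> R) -> R) :
  3^-1 < H -> H < 2^-1 -> 0 < T ->
  H^-1 < p -> p < (1 - 2 * H)^-1 ->
  is_rkhs T (Rcov H) S ip ->
  forall w q : path2 R, in_Wp T p w -> is_Q H T S ip w q ->
    ((exists A, is_adjoint S ip (DY T ip q) A) /\
     (forall A, is_adjoint S ip (DY T ip q) A ->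
        forall v : 'cV[R]_3, DY T ip q (A v) = gammaM H T ip q *m v))
    /\ Phi H T ip q = \det (gammaM H T ip q).
Proof.
(* The ranges of [H] and [p] only make [Q] well defined on [W_p]; [is_Q] assumes it. *)
move=> H3 _ /ltW T0 _ _ rkhs w q _ Qwq.
have H0 : H != 0 by rewrite gt_eqF // (lt_trans _ H3) // invr_gt0.
have Sq := is_Q_S2 T0 rkhs Qwq.
split; last exact: det_gammaM.
split; first by exists (DY_adj H T q); apply: DY_adj_adjoint.
exact: DY_adjoint_gram.
Qed.
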